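(* Let $\Gamma=\{0=\rho_1<\rho_2<\cdots\}$ be an Arf numerical semigroup and $d_i=\rho_{i+1}-\rho_i$ for $i\ge1$. Let $j\ge2$ and let $x$ be an integer with $d_j\le x<d_{j-1}$. Then $\mathrm{Ap}(\Gamma,-d_j)\subseteq\mathrm{Ap}(\Gamma,-x)$. In particular $|\mathrm{Ap}(\Gamma,x)|\ge|\mathrm{Ap}(\Gamma,d_j)|$.
   Context: A numerical semigroup is a subset of $\mathbb N$ containing $0$, closed under addition, with finite complement; its elements listed increasingly are $\rho_1<\rho_2<\cdots$. $\Gamma$ is Arf if $\rho_i+\rho_j-\rho_k\in\Gamma$ for all $i\ge j\ge k$. For $x\in\mathbb Z$, $\mathrm{Ap}(\Gamma,x)=\{s\in\Gamma: s-x\notin\Gamma\}$. *)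

From mathcomp Require Import all_boot all_order all_algebra.
Set Implicit Arguments. Unset Strict Implicit. Unset Printing Implicit Defensive.
Import Order.TTheory GRing.Theory Num.Theory.

Definition numerical_semigroup (G : pred nat) : Prop :=
  [/\ G 0,
      (forall a b, G a -> G b -> G (a + b)) &
      exists N, forall n, N <= n -> G n].

(* rho enumerates the elements of G increasingly: rho 1 < rho 2 < ...
   (index 0 is unused; indices start at 1 as in the paper). *)
Definition enumerates (G : pred nat) (rho : nat -> nat) : Prop :=
  [/\ (forall i, 0 < i -> G (rho i)),
      (forall i j, 0 < i -> i < j -> rho i < rho j) &
      (forall s, G s -> exists2 i, 0 < i & rho i = s)].

Definition Arf (G : pred nat) (rho : nat -> nat) : Prop :=
  forall i j k, 0 < k -> k <= j -> j <= i -> G (rho i + rho j - rho k).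

Definition memZ (G : pred nat) (z : int) : bool :=
  match z with Posz n => G n | Negz _ => false end.

Definition Ap (G : pred nat) (x : int) : pred nat :=
  fun s => G s && ~~ memZ G (s%:Z - x)%R.

Definition has_card (A : pred nat) (n : nat) : Prop :=
  exists s : seq nat, [/\ uniq s, (forall k, (k \in s) = A k) & size s = n].

(* If s is in Ap(G, -d_j), i.e. s + d_j is not in G, then s = rho_i with
   i < j: for i >= j the Arf property puts rho_i + d_j in G.  The gaps of an
   Arf semigroup are nonincreasing, so d_i >= d_(j-1) > x and s + x falls
   strictly between rho_i and rho_(i+1).  For the cardinalities, a counting
   argument on a window beyond the conductor gives
   |Ap(G, k)| = k + |Ap(G, -k)| for every k >= 0, and the inclusion together
   with d_j <= x yields the inequality. *)
From mathcomp Require Import all_boot all_order all_algebra.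
From mathcomp Require Import zify.
Set Implicit Arguments. Unset Strict Implicit. Unset Printing Implicit Defensive.
Import Order.TTheory GRing.Theory Num.Theory.

Lemma count_predI_predD (T : Type) (a b : pred T) (s : seq T) :
  count (fun t => a t && b t) s + count (fun t => a t && ~~ b t) s = count a s.
Proof. by elim: s => //= t s <-; case: (a t); case: (b t) => /=; lia. Qed.

Lemma has_card_count (A : pred nat) n X :
  has_card A n -> (forall s, A s -> s < X) -> n = count A (iota 0 X).
Proof.
move=> [s [s_uniq s_mem <-]] A_bound.
rewrite -size_filter; apply/perm_size/uniq_perm => //.
  by rewrite filter_uniq // iota_uniq.
move=> t; rewrite mem_filter mem_iota s_mem add0n /=.
by case At: (A t) => //=; rewrite A_bound.
Qed.

Section AperyNat.

Variable G : pred nat.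

Lemma Ap_natE (k s : nat) :
  Ap G k%:Z s = G s && ~~ ((k <= s) && G (s - k)).
Proof.
rewrite /Ap; case: (leqP k s) => [k_le_s | s_lt_k]; first by rewrite subzn.
have : (s%:Z - k%:Z < 0)%R by rewrite subr_lt0 ltz_nat.
by case: (s%:Z - k%:Z)%R.
Qed.

Lemma Ap_NnatE (k s : nat) : Ap G (- k%:Z)%R s = G s && ~~ G (s + k).
Proof. by rewrite /Ap opprK -PoszD. Qed.

Variable L : nat.
Hypothesis G_from_L : forall n, L <= n -> G n.

Lemma Ap_nat_bound (k s : nat) : Ap G k%:Z s -> s < k + L.
Proof.
rewrite Ap_natE => /andP [_]; rewrite ltnNge; apply: contra => k_L_le_s.
by rewrite G_from_L ?andbT; lia.
Qed.

(* Both counts are [#(G ∩ window)] minus [#{t < L | t, t + k in G}], and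
   the window [0, k + L) holds [k] more elements of [G] than [0, L). *)
Lemma count_Ap_nat (k : nat) :
  count (Ap G k%:Z) (iota 0 (k + L)) = k + count (Ap G (- k%:Z)%R) (iota 0 L).
Proof.
set both := fun t => G t && G (t + k).
have G_window : count G (iota 0 (k + L)) = count G (iota 0 L) + k.
  rewrite addnC iotaD count_cat add0n; congr (_ + _).
  rewrite (eq_in_count (a2 := predT)) ?count_predT ?size_iota //.
  by move=> t; rewrite mem_iota => /andP [/G_from_L].
have shifted : count (fun s => G s && ((k <= s) && G (s - k))) (iota 0 (k + L))
               = count both (iota 0 L).
  have -> : iota 0 (k + L) = iota 0 k ++ map (addn k) (iota 0 L).
    by rewrite iotaD -iotaDl addn0.
  rewrite count_cat count_map.
  rewrite (eq_in_count (a2 := pred0)) ?count_pred0; last first.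
    by move=> t; rewrite mem_iota => /andP [_ lt_t_k] /=; rewrite leqNgt lt_t_k andbF.
  by apply: eq_count => t /=; rewrite leq_addr addKn andbC addnC.
have both_le : count both (iota 0 L) <= count G (iota 0 L).
  by apply: sub_count => t /andP [].
rewrite (eq_count (Ap_natE k)) (eq_count (Ap_NnatE k)).
move: (count_predI_predD G (fun s => (k <= s) && G (s - k)) (iota 0 (k + L))).
move: (count_predI_predD G (fun t => G (t + k)) (iota 0 L)).
rewrite G_window shifted -/both; lia.
Qed.

Lemma card_Ap_nat (k n : nat) :
  has_card (Ap G k%:Z) n -> n = k + count (Ap G (- k%:Z)%R) (iota 0 L).
Proof.
by move=> cardn; rewrite -count_Ap_nat; apply: has_card_count cardn _ => s /Ap_nat_bound.
Qed.

End AperyNat.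

Section ArfGaps.

Variables (G : pred nat) (rho : nat -> nat).
Hypothesis rho_enum : enumerates G rho.
Hypothesis rho_Arf : Arf G rho.

Local Notation gap i := (rho i.+1 - rho i).

Lemma rho_leq a b : 0 < a -> a <= b -> rho a <= rho b.
Proof.
case: rho_enum => _ rho_lt _ a_gt0; rewrite leq_eqVlt => /orP [/eqP -> // | ab].
exact/ltnW/rho_lt.
Qed.

Lemma rho_gap_gt0 i : 0 < i -> 0 < gap i.
Proof. by case: rho_enum => _ rho_lt _ i_gt0; rewrite subn_gt0 rho_lt. Qed.

Lemma rho_succ_min i s : 0 < i -> G s -> rho i < s -> rho i.+1 <= s.
Proof.
case: rho_enum => _ _ rho_onto i_gt0 Gs.
have [m m_gt0 <-] := rho_onto s Gs.
move=> lt_rho; apply: rho_leq => //; rewrite ltnNge.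
by apply: contraTN lt_rho => /(rho_leq m_gt0); rewrite -leqNgt.
Qed.

Lemma gap_nonincr a : 0 < a -> gap a.+1 <= gap a.
Proof.
case: rho_enum => rhoG rho_lt _ a_gt0.
have lt_a := rho_lt a a.+1 a_gt0 (ltnSn a).
have next := rho_succ_min (ltn0Sn a) (rho_Arf a_gt0 (leqnSn a) (leqnn a.+1)).
have : rho a.+2 <= rho a.+1 + rho a.+1 - rho a by apply: next; lia.
lia.
Qed.

Lemma gap_antitone a b : 0 < a -> a <= b -> gap b <= gap a.
Proof.
move=> a_gt0; elim: b => [|b IH]; first by rewrite leqNgt a_gt0.
rewrite leq_eqVlt => /orP [/eqP -> // | ab].
apply: leq_trans (gap_nonincr _) (IH ab); exact: leq_trans a_gt0 ab.
Qed.

Lemma G_rho_add_gap i j : 0 < j -> j <= i -> G (rho i + gap j).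
Proof.
case: rho_enum => rhoG rho_lt _ j_gt0 ji.
have le_j : rho j <= rho j.+1 by apply/ltnW/rho_lt.
rewrite addnBA //; case: (ltngtP j i) ji => // [ji | <-] _.
  exact: rho_Arf.
by rewrite addnC addnK rhoG.
Qed.

Lemma Ap_gap_subset j x s : 1 < j -> gap j <= x -> x < rho j - rho j.-1 ->
  G s -> ~~ G (s + gap j) -> ~~ G (s + x).
Proof.
case: rho_enum => _ _ rho_onto j_gt1 gap_le_x x_lt_gap Gs not_G.
have [i i_gt0 rho_i] := rho_onto s Gs.
case: (leqP j i) => [ji | ij].
  by move: not_G; rewrite -rho_i G_rho_add_gap // ltnW.
have gap_i : rho j - rho j.-1 <= gap i.
  by rewrite -{1}(prednK (ltnW j_gt1)); apply: gap_antitone => //; lia.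
have x_gt0 : 0 < x by apply: leq_trans (rho_gap_gt0 _) gap_le_x; lia.
apply/negP => G_sx; have next := rho_succ_min i_gt0 G_sx.
have : rho i.+1 <= s + x by apply: next; lia.
lia.
Qed.

End ArfGaps.

Theorem lemma3p5 (G : pred nat) (rho : nat -> nat)
  (hG : numerical_semigroup G) (hrho : enumerates G rho) (hArf : Arf G rho)
  (j : nat) (x : int) (hj : 2 <= j)
  (hx1 : ((rho j.+1 - rho j)%:Z <= x)%R)
  (hx2 : (x < (rho j - rho j.-1)%:Z)%R) :
  (forall s, Ap G (- (rho j.+1 - rho j)%:Z)%R s -> Ap G (- x)%R s) /\
  (forall m n, has_card (Ap G x) m -> has_card (Ap G (rho j.+1 - rho j)%:Z) n ->
     n <= m).
Proof.
case: hG => _ _ [N G_from_N].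
case: x hx1 hx2 => [x | //] hx1 hx2; rewrite lez_nat in hx1; rewrite ltz_nat in hx2.
have Ap_sub s : Ap G (- (rho j.+1 - rho j)%:Z)%R s -> Ap G (- x%:Z)%R s.
  rewrite !Ap_NnatE => /andP [Gs not_G]; rewrite Gs.
  exact: (Ap_gap_subset hrho hArf hj hx1 hx2 Gs not_G).
split=> // m n cardm cardn.
rewrite (card_Ap_nat G_from_N cardm) (card_Ap_nat G_from_N cardn).
exact/leq_add/sub_count.
Qed.
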